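(* Let $L\subseteq\Sigma^*$ be a regular language with $\kappa(L)=n$. If $n=1$ (and $L$ is closed), then $\kappa(L^R)=1$. If $n\ge 2$: 1. if $L$ is prefix-closed, $\kappa(L^R)\le 2^{n-1}$, and this is tight over alphabets with $|\Sigma|\ge 2$; 2. if $L$ is suffix-closed, $\kappa(L^R)\le 2^{n-1}+1$, and this is tight over alphabets with $|\Sigma|\ge 3$; 3. if $L$ is factor-closed, $\kappa(L^R)\le 2^{n-2}+1$, and this is tight over alphabets with $|\Sigma|\ge 3$; 4. if $L$ is subword-closed, $\kappa(L^R)\le 2^{n-2}+1$, and this is tight over alphabets with $|\Sigma|\ge 2n$. Here ''tight'' means that for every $n\ge 2$ there is a language of the given class over such an alphabet with $\kappa(L)=n$ attaining the bound.
   Context: $\Sigma$ is a finite non-empty alphabet. $L_w=\{x\mid wx\in L\}$ is the left quotient of $L$ by $w$, and $\kappa(L)$ is the number of distinct quotients of $L$ (its state complexity). $L^R=\{w^R\mid w\in L\}$, where $w^R$ is the reversal of $w$. A language is prefix-closed (suffix-, factor-, subword-closed) if it contains every prefix (suffix, factor, subword) of each of its words, where subword means scattered subsequence. *)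

From mathcomp Require Import all_boot.
Set Implicit Arguments. Unset Strict Implicit. Unset Printing Implicit Defensive.

Definition lang (S : finType) := seq S -> bool.

Definition lang_eq (S : finType) (L1 L2 : lang S) : Prop := forall x, L1 x = L2 x.

Definition quot (S : finType) (L : lang S) (w : seq S) : lang S :=
  fun x => L (w ++ x).

Definition rev_lang (S : finType) (L : lang S) : lang S := fun w => L (rev w).

(* kappa(L) = n : L has exactly n distinct quotients, i.e. there are words
   w_0..w_{n-1} with pairwise distinct quotients, and every quotient is one of them. *)
Definition sc_eq (S : finType) (L : lang S) (n : nat) : Prop :=
  exists ws : seq (seq S),
    size ws = n /\
    (forall i j, i < n -> j < n -> i != j ->
       ~ lang_eq (quot L (nth [::] ws i)) (quot L (nth [::] ws j))) /\
    (forall w, exists2 u, u \in ws & lang_eq (quot L w) (quot L u)).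

Definition sc_le (S : finType) (L : lang S) (m : nat) : Prop :=
  exists ws : seq (seq S), size ws <= m /\
    (forall w, exists2 u, u \in ws & lang_eq (quot L w) (quot L u)).

Definition prefix_closed (S : finType) (L : lang S) : Prop :=
  forall u v, L (u ++ v) -> L u.
Definition suffix_closed (S : finType) (L : lang S) : Prop :=
  forall u v, L (u ++ v) -> L v.
Definition factor_closed (S : finType) (L : lang S) : Prop :=
  forall u v w, L (u ++ v ++ w) -> L v.
(* subword = scattered subsequence (mathcomp's subseq) *)
Definition subword_closed (S : finType) (L : lang S) : Prop :=
  forall u v, subseq u v -> L v -> L u.

From mathcomp Require Import all_boot zify.
From Stdlib Require Import Classical ClassicalEpsilon Lia.
Set Implicit Arguments. Unset Strict Implicit. Unset Printing Implicit Defensive.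

(* Let u_1, ..., u_n represent the quotients of L.  The quotient of L^R by w is
   determined by the bit vector ([w^R \in L_(u_i)])_i, which gives 2^n.  A dead
   quotient (present when L is prefix-closed and n >= 2) contributes a constant bit.
   The quotient L_eps = L contributes the bit [w^R \in L]; when L is suffix-closed
   and this bit is 0, the quotient of L^R by w is empty, so the bit can be traded
   for one extra quotient: 2^(n-1) + 1.  Factor-closed languages have both kinds of
   special quotients: 2^(n-2) + 1.
   For tightness, states p_0, ..., p_(k-1) form a cycle under both letters a and b,
   except that b is fatal in p_(k-1).  Read from p_(k-1-j), a word of length k over
   {a, b} dies exactly when its j-th letter is b, so the 2^k such words have pairwise
   distinct reversed quotients (k = n - 1 for prefix- and suffix-closed, k = n - 2
   for factor-closed witnesses).  The subword-closed witness lets a word choose one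
   of n - 2 letters and then forbids the companion "veto" letter of its choice. *)

Lemma size_filter_notin (T : eqType) (D s : seq T) :
  uniq D -> {subset D <= s} -> size [seq x <- s | x \notin D] + size D <= size s.
Proof.
move=> uD sD; rewrite -(count_predC (mem D) s) size_filter addnC.
apply: leq_add => //; rewrite -size_filter.
by apply: uniq_leq_size uD _ => x xD; rewrite mem_filter; apply/andP; split; last exact: sD.
Qed.

Section Quotients.
Variable S : finType.
Implicit Types (K : lang S) (u v w x y : seq S).

Definition covers K (cs : seq (seq S)) :=
  forall w, exists2 u, u \in cs & lang_eq (quot K w) (quot K u).

Definition quot_injective K (T : Type) (f : T -> seq S) :=
  forall i j, lang_eq (quot K (f i)) (quot K (f j)) -> i = j.

Lemma rev_quot K w x : quot (rev_lang K) w x = K (rev x ++ rev w).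
Proof. by rewrite /quot /rev_lang rev_cat. Qed.

Lemma sc_eq_ext K K' n : lang_eq K K' -> sc_eq K n -> sc_eq K' n.
Proof.
move=> eK [ws [hs [hd hc]]].
have eq_quot x y : lang_eq (quot K x) (quot K y) <-> lang_eq (quot K' x) (quot K' y).
  by split=> h z; move: (h z); rewrite /quot !eK.
exists ws; split=> //; split=> [i j hi hj hij /eq_quot | w]; first exact: hd.
by have [u hu /eq_quot] := hc w; exists u.
Qed.

Lemma sc_le_of_sig K (X : finType) (f : seq S -> X) m :
  #|X| <= m -> (forall w w', f w = f w' -> lang_eq (quot K w) (quot K w')) ->
  sc_le K m.
Proof.
move=> hX hf; pose g t := epsilon (inhabits [::]) (fun w => f w = t).
exists [seq g t | t <- enum X]; split; first by rewrite size_map -cardE.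
move=> w; exists (g (f w)); first by rewrite map_f ?mem_enum.
apply: hf; symmetry; apply: (epsilon_spec (inhabits [::]) (fun w' => f w' = f w)).
by exists w.
Qed.

Lemma quot_injective_option K (T : Type) (f : T -> seq S) w0 :
  quot_injective K f -> (forall i, ~ lang_eq (quot K w0) (quot K (f i))) ->
  quot_injective K (fun o => if o is Some i then f i else w0).
Proof.
move=> hf hw0 [i|] [j|] //= h; first by rewrite (hf _ _ h).
- by case: (hw0 i) => x; rewrite h.
- by case: (hw0 j).
Qed.

Lemma card_le_covers K (U : finType) (g : U -> seq S) cs :
  covers K cs -> quot_injective K g -> #|U| <= size cs.
Proof.
move=> hc hg.
pose rep t c := c \in cs /\ lang_eq (quot K (g t)) (quot K c).
pose r t := epsilon (inhabits [::]) (rep t).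
have rP t : rep t (r t).
  by apply: epsilon_spec; have [c hc1 hc2] := hc (g t); exists c.
have r_inj : injective r.
  move=> t t' e; apply: hg => x; have [_ h] := rP t; have [_ h'] := rP t'.
  by rewrite h h' e.
rewrite cardE -(size_map r); apply: uniq_leq_size; first by rewrite map_inj_uniq ?enum_uniq.
by move=> _ /mapP [t _ ->]; case: (rP t).
Qed.

Lemma sc_eq_of_quot_injective K (T : finType) (f : T -> seq S) :
  sc_le K #|T| -> quot_injective K f -> sc_eq K #|T|.
Proof.
move=> [cs [hcs hcov]] hf.
exists [seq f i | i <- enum T]; split; first by rewrite size_map -cardE.
split=> [i j|w].
  rewrite cardT enumT => hi hj hij he; have x0 : T by move: hi; case: (Finite.enum T).
  move: he; rewrite !(nth_map x0) // => /hf e; move/negP: hij; apply.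
  by rewrite -(nth_uniq x0 hi hj) ?e // -enumT enum_uniq.
case: (classic (exists i, lang_eq (quot K w) (quot K (f i)))) => [[i hi]|hno].
  by exists (f i); rewrite ?map_f ?mem_enum.
have hw : forall i, ~ lang_eq (quot K w) (quot K (f i)) by move=> i hi; apply: hno; exists i.
(* Otherwise the family extended by w has #|T| + 1 pairwise distinct quotients. *)
have := card_le_covers hcov (quot_injective_option hf hw).
by rewrite card_option => /leq_trans /(_ hcs); rewrite ltnn.
Qed.

Lemma sc_eq1_const K : sc_eq K 1 -> forall w, K w = K [::].
Proof.
move=> [[|u [|? ?]] [//= _ [_ hc]]] w.
have [_ /[!inE] /eqP -> ew] := hc w; have [_ /[!inE] /eqP -> e0] := hc [::].
by have := ew [::]; have := e0 [::]; rewrite /quot !cats0 => -> ->.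
Qed.

Lemma sc_eq_const K : (forall w, K w = K [::]) -> sc_eq K 1.
Proof.
move=> hK; exists [:: [::]]; split=> //; split=> [[|i] [|j] //|w].
by exists [::]; rewrite ?inE // => x; rewrite /quot hK [RHS]hK.
Qed.

Lemma factor_closed_prefix K : factor_closed K -> prefix_closed K.
Proof. by move=> hf u v h; apply: (hf [::] u v). Qed.

Lemma factor_closed_suffix K : factor_closed K -> suffix_closed K.
Proof. by move=> hf u v h; apply: (hf u v [::]); rewrite cats0. Qed.

Lemma prefix_suffix_factor_closed K :
  prefix_closed K -> suffix_closed K -> factor_closed K.
Proof. by move=> hp hs u v w; rewrite catA => /hp /hs. Qed.

Lemma subword_closed_factor K : subword_closed K -> factor_closed K.
Proof.
move=> hw u v w; apply: hw.
by apply: subseq_trans (prefix_subseq v w) _; apply: suffix_subseq.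
Qed.
End Quotients.

Section ReversalUpperBounds.
Variables (S : finType) (L : lang S).
Implicit Types (u v w x y : seq S) (D ws : seq (seq S)).

Definition quot_via_membership u := forall y y', L y = L y' -> L (u ++ y) = L (u ++ y').

Definition rows D ws w :=
  map_tuple (fun u => L (u ++ rev w)) (in_tuple [seq u <- ws | u \notin D]).

Lemma rev_quot_eq_of_rows D ws w w' : covers L ws ->
  (forall u, u \in D -> quot_via_membership u) ->
  L (rev w) = L (rev w') ->
  [seq L (u ++ rev w) | u <- ws & u \notin D] = [seq L (u ++ rev w') | u <- ws & u \notin D] ->
  lang_eq (quot (rev_lang L) w) (quot (rev_lang L) w').
Proof.
move=> hc hD eL /eq_in_map erow x; rewrite !rev_quot.
have [u hu eu] := hc (rev x); rewrite -![L (rev x ++ _)]/(quot L (rev x) _) !eu.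
case: (boolP (u \in D)) => uD; first exact: hD uD _ _ eL.
by apply: erow; rewrite mem_filter uD.
Qed.

Lemma nil_rep ws : covers L ws -> exists2 u, u \in ws & forall y, L (u ++ y) = L y.
Proof. by move=> hc; have [u hu eu] := hc [::]; exists u => // y; rewrite -eu. Qed.

Lemma dead_rep ws v : prefix_closed L -> covers L ws -> ~~ L v ->
  exists2 u, u \in ws & forall y, L (u ++ y) = false.
Proof.
move=> hp hc hv; have [u hu eu] := hc v; exists u => // y.
by rewrite -[L _]/(quot L u y) -eu; apply/negbTE/negP => /hp; apply/negP.
Qed.

Lemma sc_eq_nonconst n : 2 <= n -> sc_eq L n -> (exists v, ~~ L v) /\ (exists v, L v).
Proof.
move=> hn [ws [_ [hd _]]]; set u0 := nth [::] ws 0; set u1 := nth [::] ws 1.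
have [x hx] : exists x, L (u0 ++ x) != L (u1 ++ x).
  apply: NNPP => hno; apply: (hd 0 1 (ltnW hn) hn isT) => x.
  by apply/eqP/negPn/negP => hx; apply: hno; exists x.
by case e0: (L (u0 ++ x)) hx; case e1: (L (u1 ++ x)) => // _;
  split; [exists (u1 ++ x) | exists (u0 ++ x) | exists (u0 ++ x) | exists (u1 ++ x)];
  rewrite ?e0 ?e1.
Qed.

Lemma prefix_upper n : 2 <= n -> sc_eq L n -> prefix_closed L ->
  sc_le (rev_lang L) (2 ^ n.-1).
Proof.
move=> hn hL hp; have [[v hv] _] := sc_eq_nonconst hn hL.
have [ws [hs [_ hc]]] := hL.
have [k hk k_dead] := dead_rep hp hc hv.
have [i0 hi0 i0_nil] := nil_rep hc.
apply: (sc_le_of_sig (f := rows [:: k] ws)) => [|w w' /(congr1 val) erow].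
  rewrite card_tuple card_bool leq_pexp2l // -ltnS prednK ?(ltnW hn) // -hs -addn1.
  by apply: size_filter_notin => // u /[!inE] /eqP ->.
apply: (rev_quot_eq_of_rows hc _ _ erow) => [u /[!inE] /eqP -> y y' _|].
  by rewrite !k_dead.
rewrite -(i0_nil (rev w)) -(i0_nil (rev w')).
(* if the representative of [::] is the dead one, L is empty *)
case: (i0 =P k) => [->|ne]; first by rewrite !k_dead.
by move/eq_in_map: erow; apply; rewrite mem_filter inE; apply/andP; split; [apply/eqP|].
Qed.

Lemma suffix_rev_sc_le ws D : suffix_closed L -> covers L ws ->
  uniq D -> {subset D <= ws} ->
  (forall u, u \in D -> quot_via_membership u) ->
  sc_le (rev_lang L) (2 ^ (size ws - size D) + 1).
Proof.
move=> hsc hc uD sD hD.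
apply: (sc_le_of_sig (f := fun w => if L (rev w) then Some (rows D ws w) else None)).
  rewrite card_option card_tuple card_bool addn1 ltnS leq_pexp2l //.
  rewrite leq_subRL ?uniq_leq_size // addnC; exact: size_filter_notin.
move=> w w'; case ew: (L (rev w)); case ew': (L (rev w')) => // e.
  by case: e => erow; apply: (rev_quot_eq_of_rows hc hD _ erow); rewrite ew ew'.
by move=> x; rewrite !rev_quot; apply/idP/idP => /hsc; rewrite ?ew ?ew'.
Qed.

Lemma suffix_upper n : sc_eq L n -> suffix_closed L -> sc_le (rev_lang L) (2 ^ n.-1 + 1).
Proof.
move=> [ws [hs [_ hc]]] hsc; have [i0 hi0 i0_nil] := nil_rep hc.
rewrite -subn1 -hs; apply: (suffix_rev_sc_le (D := [:: i0])) => //.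
  by move=> u /[!inE] /eqP ->.
by move=> u /[!inE] /eqP -> y y'; rewrite !i0_nil.
Qed.

Lemma factor_upper n : 2 <= n -> sc_eq L n -> factor_closed L ->
  sc_le (rev_lang L) (2 ^ (n - 2) + 1).
Proof.
move=> hn hL hf; have [[v hv] [v' hv']] := sc_eq_nonconst hn hL.
have [ws [hs [_ hc]]] := hL.
have [k hk k_dead] := dead_rep (factor_closed_prefix hf) hc hv.
have [i0 hi0 i0_nil] := nil_rep hc.
have ki0 : k != i0 by apply/eqP => e; move: (i0_nil v'); rewrite -e k_dead hv'.
rewrite -hs; apply: (suffix_rev_sc_le (D := [:: k; i0])) (factor_closed_suffix hf) hc _ _ _.
- by rewrite /= inE ki0.
- by move=> u /[!inE] /orP [] /eqP ->.
- by move=> u /[!inE] /orP [] /eqP -> y y' e; rewrite ?k_dead ?i0_nil.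
Qed.
End ReversalUpperBounds.

Section Automata.
Variables (S T : finType) (step : T -> S -> T) (s0 : T) (acc : pred T).
Implicit Types (q : T) (u v w x : seq S).

Definition run q w : T := foldl step q w.

Definition dfa_lang : lang S := fun w => acc (run s0 w).

Definition dead q := forall v, ~~ acc (run q v).

Lemma run_cat q u v : run q (u ++ v) = run (run q u) v.
Proof. exact: foldl_cat. Qed.

Lemma run_cons q c w : run q (c :: w) = run (step q c) w.
Proof. by []. Qed.

Lemma run_seq1 q c : run q [:: c] = step q c.
Proof. by []. Qed.

Lemma run_rcons q w c : run q (rcons w c) = step (run q w) c.
Proof. by rewrite -cats1 run_cat. Qed.

Lemma quot_dfa_lang w x : quot dfa_lang w x = acc (run (run s0 w) x).
Proof. by rewrite /quot /dfa_lang run_cat. Qed.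

Lemma absorbing_dead q : (forall c, step q c = q) -> ~~ acc q -> dead q.
Proof. by move=> hq hacc; elim=> // c v; rewrite /run /= hq. Qed.

Lemma dfa_prefix_closed : (forall q, ~~ acc q -> dead q) -> prefix_closed dfa_lang.
Proof.
by move=> hdead u v; rewrite /dfa_lang run_cat; apply: contraLR => /hdead.
Qed.

Lemma dfa_suffix_closed : acc s0 ->
  (forall q c, [\/ step s0 c = s0, step q c = step s0 c | dead q]) ->
  suffix_closed dfa_lang.
Proof.
move=> acc0 hstep u v; rewrite /dfa_lang run_cat.
elim: v (run s0 u) => // c v IH q; rewrite /run /=.
by case: (hstep q c) => [->|->|/(_ (c :: v))/negbTE ->] //; apply: IH.
Qed.

Lemma dfa_subword_closed (R : rel T) : R s0 s0 ->
  (forall q, ~~ acc q -> dead q) ->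
  (forall q1 q2, R q1 q2 -> acc q2 -> acc q1) ->
  (forall q1 q2 c, R q1 q2 -> acc (step q2 c) ->
     R q1 (step q2 c) /\ R (step q1 c) (step q2 c)) ->
  subword_closed dfa_lang.
Proof.
move=> R0 hdead hacc hstep.
suff key v : forall u q1 q2, subseq u v -> R q1 q2 -> acc (run q2 v) -> acc (run q1 u).
  by move=> u v /key; apply.
elim: v => [|c v IH] u q1 q2; first by rewrite subseq0 => /eqP -> /hacc.
move=> huv hR hv; have hc : acc (step q2 c) by apply: contraT => /hdead /(_ v) /negP.
have [R1 R2] := hstep _ _ c hR hc.
case: u huv => [|d u] /=; first by move=> _; exact: (IH _ _ _ (sub0seq v) R1 hv).
by case: eqP => [-> huv|_ huv]; [exact: (IH _ _ _ huv R2 hv) | exact: (IH _ _ _ huv R1 hv)].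
Qed.

Variable aw : T -> seq S.
Hypothesis run_aw : forall q, run s0 (aw q) = q.

Lemma dfa_sc_eq : (forall q q', q != q' -> exists x, acc (run q x) != acc (run q' x)) ->
  sc_eq dfa_lang #|T|.
Proof.
move=> hdist; apply: (sc_eq_of_quot_injective (f := aw)).
  by apply: (sc_le_of_sig (f := run s0)) => // w w' e x; rewrite !quot_dfa_lang e.
move=> q q' he; apply/eqP; apply: contraT => /hdist [x].
by have := he x; rewrite !quot_dfa_lang !run_aw => ->; rewrite eqxx.
Qed.

Lemma dfa_rev_quot_neq q v v' : acc (run q (rev v)) != acc (run q (rev v')) ->
  ~ lang_eq (quot (rev_lang dfa_lang) v) (quot (rev_lang dfa_lang) v').
Proof.
move=> hne he; have := he (rev (aw q)).
by rewrite !rev_quot revK /dfa_lang !run_cat run_aw => e; rewrite e eqxx in hne.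
Qed.

Lemma dfa_rev_quot_injective m (q : 'I_m -> T) (code : m.-tuple bool -> seq S) :
  (forall j s s', tnth s j != tnth s' j ->
     acc (run (q j) (code s)) != acc (run (q j) (code s'))) ->
  quot_injective (rev_lang dfa_lang) (fun s => rev (code s)).
Proof.
move=> hcode s s' he; apply: NNPP => hss'.
have [j hj] : exists j, tnth s j != tnth s' j.
  apply: NNPP => hno; apply: hss'; apply: eq_from_tnth => j.
  by apply/eqP/negPn/negP => hj; apply: hno; exists j.
by apply: (dfa_rev_quot_neq (q := q j) _ he); rewrite !revK; apply: hcode.
Qed.
End Automata.

Arguments run : simpl never.

Lemma nth_rcons_nseq k i : nth false (rcons (nseq k false) true) i = (i == k).
Proof. by rewrite nth_rcons size_nseq nth_nseq; case: ltngtP. Qed.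

Section Rotation.
Variables (S T : finType) (step : T -> S -> T) (acc : pred T).
Variables (m' : nat) (a b : S) (p : nat -> T) (z : T).
Local Notation m := m'.+1.

Definition rotation :=
  [/\ forall r, r < m -> step (p r) a = p (r.+1 %% m),
      forall r, r < m -> step (p r) b = if r == m' then z else p (r.+1 %% m),
      step z a = z, step z b = z
    & forall r, r < m -> acc (p r) = ~~ acc z].

Definition bit_letter (x : bool) := if x then b else a.

Definition kill_word i := map bit_letter (rcons (nseq (m' - i) false) true).

Lemma run_bits_fixed q s : step q a = q -> step q b = q -> run step q (map bit_letter s) = q.
Proof. by move=> ha hb; elim: s => //= -[] s; rewrite run_cons ?ha ?hb. Qed.

Hypothesis hrot : rotation.

Lemma run_z_bits s : run step z (map bit_letter s) = z.
Proof. by case: hrot => _ _ za zb _; apply: run_bits_fixed. Qed.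

Lemma run_p_nseq i r : i + r < m -> run step (p i) (nseq r a) = p (i + r).
Proof.
case: hrot => step_a _ _ _ _; elim: r i => [|r IH] i hir; first by rewrite addn0.
by rewrite run_cons step_a ?modn_small -?addSnnS ?IH //; lia.
Qed.

(* Started in [p (m' - j)], the word is in state [p m'] exactly when it reads its
   [j]-th letter, and that is the only place where [b] is fatal. *)
Lemma acc_run_bits s j : size s <= m -> j < m ->
  acc (run step (p (m' - j)) (map bit_letter s)) = if nth false s j then acc z else ~~ acc z.
Proof.
case: hrot => step_a step_b za zb acc_p.
elim: s j => [|x s IH] j hs hj; first by rewrite acc_p ?nth_nil //; lia.
have {hs} hs' : size s <= m' by [].
rewrite map_cons run_cons; case: j hj => [|j] hj.
  rewrite subn0; case: x => /=; first by rewrite step_b // eqxx run_z_bits.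
  by rewrite step_a // modnn -{1}(subnn m') IH ?(nth_default _ hs') //; lia.
have e : (m' - j.+1).+1 %% m = m' - j by rewrite modn_small; lia.
have ne : (m' - j.+1 == m') = false by apply/eqP; lia.
by case: x => /=; rewrite ?step_b ?step_a ?ne ?e ?IH //; lia.
Qed.

Lemma acc_run_kill i j : i < m -> j < m ->
  acc (run step (p j) (kill_word i)) = if j == i then acc z else ~~ acc z.
Proof.
move=> hi hj; have hk : size (rcons (nseq (m' - i) false) true) <= m.
  by rewrite size_rcons size_nseq; lia.
rewrite /kill_word -{1}(subKn (hj : j <= m')) acc_run_bits ?nth_rcons_nseq //; last lia.
by have -> : (m' - j == m' - i) = (j == i) by apply/eqP/eqP => ?; lia.
Qed.

Lemma p_distinguishable i j : i < m -> j < m -> i != j ->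
  exists x, acc (run step (p i) x) != acc (run step (p j) x).
Proof.
move=> hi hj hij; exists (kill_word i).
rewrite !acc_run_kill // eqxx; have -> : (j == i) = false by rewrite eq_sym (negbTE hij).
by case: (acc z).
Qed.

Lemma rotation_rev_quot_injective s0 aw : (forall q, run step s0 (aw q) = q) ->
  quot_injective (rev_lang (dfa_lang step s0 acc))
    (fun s : m.-tuple bool => rev (map bit_letter s)).
Proof.
move=> haw; apply: (dfa_rev_quot_injective (q := fun j : 'I_m => p (m' - j))
  (code := fun s : m.-tuple bool => map bit_letter s) haw) => j s s'.
rewrite !acc_run_bits ?size_tuple // -!tnth_nth.
by case: (tnth s j); case: (tnth s' j); case: (acc z).
Qed.
End Rotation.

Section CyclicCounter.
Variables (S : finType) (a b : S) (m' : nat).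
Hypothesis hab : a != b.
Local Notation m := m'.+1.

Definition cyclic_step (i : 'I_m) (c : S) : option 'I_m :=
  if c == a then Some (inord (i.+1 %% m))
  else if (c == b) && ((i : nat) != m') then Some (inord (i.+1 %% m)) else None.

Lemma cyclic_step_a r : r < m -> cyclic_step (inord r) a = Some (inord (r.+1 %% m)).
Proof. by move=> hr; rewrite /cyclic_step eqxx inordK. Qed.

Lemma cyclic_step_b r : r < m ->
  cyclic_step (inord r) b = if r == m' then None else Some (inord (r.+1 %% m)).
Proof. by move=> hr; rewrite /cyclic_step eq_sym (negbTE hab) eqxx inordK //; case: eqP. Qed.

Definition prefix_step (q : option 'I_m) (c : S) : option 'I_m :=
  if q is Some i then cyclic_step i c else None.

Definition prefix_witness : lang S := dfa_lang prefix_step (Some (inord 0)) isSome.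

Definition prefix_access (q : option 'I_m) : seq S :=
  if q is Some i then nseq i a else rcons (nseq m' a) b.

Lemma prefix_rotation : rotation prefix_step isSome m' a b (fun r => Some (inord r)) None.
Proof. by split=> // r hr; [exact: cyclic_step_a | exact: cyclic_step_b]. Qed.

Lemma prefix_run_access q : run prefix_step (Some (inord 0)) (prefix_access q) = q.
Proof.
have hp := run_p_nseq prefix_rotation (i := 0).
case: q => [i|] /=; first by rewrite hp add0n ?inord_val.
by rewrite run_rcons hp // /prefix_step cyclic_step_b // eqxx.
Qed.

Lemma prefix_witness_closed : prefix_closed prefix_witness.
Proof. by apply: dfa_prefix_closed => -[//|_]; apply: absorbing_dead. Qed.

Lemma prefix_witness_sc : sc_eq prefix_witness m.+1.
Proof.
have -> : m.+1 = #|{: option 'I_m}| by rewrite card_option card_ord.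
apply: (dfa_sc_eq prefix_run_access) => -[i|] [j|] // hij; try by exists [::].
have := p_distinguishable prefix_rotation (ltn_ord i) (ltn_ord j).
by rewrite !inord_val; apply; apply: contraNneq hij => /val_inj ->.
Qed.

Lemma prefix_witness_rev_sc : sc_eq (rev_lang prefix_witness) (2 ^ m).
Proof.
have -> : 2 ^ m = #|{: m.-tuple bool}| by rewrite card_tuple card_bool.
have hinj := rotation_rev_quot_injective prefix_rotation prefix_run_access.
apply: (sc_eq_of_quot_injective _ hinj).
rewrite card_tuple card_bool.
exact: (prefix_upper (n := m.+1) _ prefix_witness_sc prefix_witness_closed).
Qed.

Variable e : S.
Hypothesis he : e \notin [:: a; b].

Definition suffix_step (q : option 'I_m) (c : S) : option 'I_m :=
  if c \in [:: a; b] then (if q is Some i then cyclic_step i c else None)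
  else Some (inord 0).

Definition suffix_witness : lang S := dfa_lang suffix_step None (fun q => q == None).

Definition suffix_access (q : option 'I_m) : seq S :=
  if q is Some i then e :: nseq i a else [::].

Lemma suffix_rotation :
  rotation suffix_step (fun q => q == None) m' a b (fun r => Some (inord r)) None.
Proof.
rewrite /rotation /suffix_step !inE !eqxx ?orbT.
by split=> // r hr; [exact: cyclic_step_a | exact: cyclic_step_b].
Qed.

Lemma suffix_step_e q : suffix_step q e = Some (inord 0).
Proof. by rewrite /suffix_step (negbTE he). Qed.

Lemma suffix_run_access q : run suffix_step None (suffix_access q) = q.
Proof.
case: q => [i|] //=; rewrite run_cons suffix_step_e.
by rewrite (run_p_nseq suffix_rotation (i := 0)) add0n ?inord_val.
Qed.

Lemma suffix_witness_closed : suffix_closed suffix_witness.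
Proof.
apply: dfa_suffix_closed => // q c; rewrite /suffix_step.
by case: (c \in _); [apply: Or31 | apply: Or32].
Qed.

Lemma suffix_witness_sc : sc_eq suffix_witness m.+1.
Proof.
have -> : m.+1 = #|{: option 'I_m}| by rewrite card_option card_ord.
apply: (dfa_sc_eq suffix_run_access) => -[i|] [j|] // hij; try by exists [::].
have := p_distinguishable suffix_rotation (ltn_ord i) (ltn_ord j).
by rewrite !inord_val; apply; apply: contraNneq hij => /val_inj ->.
Qed.

Lemma suffix_witness_rev_sc : sc_eq (rev_lang suffix_witness) (2 ^ m + 1).
Proof.
have -> : 2 ^ m + 1 = #|{: option (m.-tuple bool)}|.
  by rewrite card_option card_tuple card_bool addn1.
have hinj := rotation_rev_quot_injective suffix_rotation suffix_run_access.
apply: (sc_eq_of_quot_injective _ (quot_injective_option (w0 := [:: e]) hinj _)).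
  rewrite card_option card_tuple card_bool -[(2 ^ m).+1]addn1.
  exact: (suffix_upper suffix_witness_sc suffix_witness_closed).
move=> s; apply: (dfa_rev_quot_neq suffix_run_access (q := None)).
by rewrite revK (run_z_bits suffix_rotation) /= run_cons suffix_step_e.
Qed.

Definition factor_step (q : option (option 'I_m)) (c : S) : option (option 'I_m) :=
  match q with
  | Some None => if c \in [:: a; b] then Some None else Some (Some (inord 0))
  | Some (Some i) =>
      if c \in [:: a; b] then omap Some (cyclic_step i c) else Some (Some (inord 0))
  | None => None
  end.

Definition factor_witness : lang S := dfa_lang factor_step (Some None) isSome.

Definition factor_access (q : option (option 'I_m)) : seq S :=
  match q with
  | Some None => [::]
  | Some (Some i) => e :: nseq i a
  | None => e :: rcons (nseq m' a) b
  end.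

Lemma factor_rotation :
  rotation factor_step isSome m' a b (fun r => Some (Some (inord r))) None.
Proof.
rewrite /rotation /factor_step !inE !eqxx ?orbT.
by split=> // r hr; rewrite ?cyclic_step_a ?cyclic_step_b //; case: eqP.
Qed.

Lemma factor_step_e o : factor_step (Some o) e = Some (Some (inord 0)).
Proof. by case: o => [?|]; rewrite /factor_step (negbTE he). Qed.

Lemma factor_run_access q : run factor_step (Some None) (factor_access q) = q.
Proof.
have [_ step_b _ _ _] := factor_rotation.
have hp := run_p_nseq factor_rotation (i := 0).
case: q => [[i|]|] //=; rewrite run_cons factor_step_e; first by rewrite hp add0n ?inord_val.
by rewrite run_rcons hp // step_b // eqxx.
Qed.

Lemma factor_run_bits_nil s : run factor_step (Some None) (map (bit_letter a b) s) = Some None.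
Proof. by apply: run_bits_fixed; rewrite /factor_step !inE eqxx ?orbT. Qed.

Lemma factor_witness_closed : factor_closed factor_witness.
Proof.
have dead_none : dead factor_step isSome None by apply: absorbing_dead.
apply: prefix_suffix_factor_closed; first by apply: dfa_prefix_closed => -[].
apply: dfa_suffix_closed => // -[o|] c; last exact: Or33.
by rewrite /factor_step; case: (c \in _); [apply: Or31 | case: o => [?|]; apply: Or32].
Qed.

Lemma factor_witness_sc : sc_eq factor_witness m.+2.
Proof.
have -> : m.+2 = #|{: option (option 'I_m)}| by rewrite !card_option card_ord.
have hk j : exists x, isSome (run factor_step (Some None) x) !=
                       isSome (run factor_step (Some (Some j)) x).
  exists (kill_word m' a b j); rewrite factor_run_bits_nil.
  by have := acc_run_kill factor_rotation (ltn_ord j) (ltn_ord j); rewrite inord_val eqxx => ->.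
apply: (dfa_sc_eq factor_run_access) => -[[i|]|] [[j|]|] // hij; try by exists [::].
- have := p_distinguishable factor_rotation (ltn_ord i) (ltn_ord j).
  by rewrite !inord_val; apply; apply: contraNneq hij => /val_inj ->.
by have [x hx] := hk i; exists x; rewrite eq_sym.
Qed.

Lemma factor_witness_rev_sc : sc_eq (rev_lang factor_witness) (2 ^ m + 1).
Proof.
have -> : 2 ^ m + 1 = #|{: option (m.-tuple bool)}|.
  by rewrite card_option card_tuple card_bool addn1.
have hinj := rotation_rev_quot_injective factor_rotation factor_run_access.
apply: (sc_eq_of_quot_injective _
  (quot_injective_option (w0 := rev (factor_access None)) hinj _)).
  rewrite card_option card_tuple card_bool -[(2 ^ m).+1]addn1.
  exact: (factor_upper (n := m.+2) _ factor_witness_sc factor_witness_closed).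
move=> s; apply: (dfa_rev_quot_neq factor_run_access (q := Some None)).
by rewrite !revK factor_run_access factor_run_bits_nil.
Qed.
End CyclicCounter.

Section LetterStar.
Variables (S : finType) (a c : S).
Hypothesis hac : a != c.

Definition star_step (q : bool) (x : S) := q && (x == a).

Definition letter_star : lang S := dfa_lang star_step true id.

Lemma run_star q w : run star_step q w = q && all (pred1 a) w.
Proof. by elim: w q => [|x w IH] q; rewrite ?andbT // run_cons IH /star_step andbA. Qed.

Lemma letter_star_subword : subword_closed letter_star.
Proof.
move=> u v huv; rewrite /letter_star /dfa_lang !run_star /= => /allP hv.
by apply/allP => x /(mem_subseq huv); apply: hv.
Qed.

Lemma letter_star_sc : sc_eq letter_star 2.
Proof.
rewrite -card_bool; apply: (dfa_sc_eq (aw := fun q : bool => if q then [::] else [:: c])).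
  by case; rewrite // run_cons /star_step eq_sym (negbTE hac).
by move=> [] [] // _; exists [::].
Qed.

Lemma letter_star_rev_sc : sc_eq (rev_lang letter_star) 2.
Proof.
apply: sc_eq_ext letter_star_sc => w.
by rewrite /rev_lang /letter_star /dfa_lang !run_star all_rev.
Qed.
End LetterStar.

Section SubwordWitness.
Variables (S : finType) (x0 : S) (xs : seq S) (m' : nat).
Local Notation m := m'.+1.
Hypotheses (xs_size : size xs = m + m) (xs_uniq : uniq xs).

Definition choice_letter i := nth x0 xs i.
Definition veto_letter i := nth x0 xs (m + i).

(* Words with at most one choice letter, in which the choice of [j] is never
   followed by the veto letter of [j]. *)
Definition subword_step (q : option (option 'I_m)) (c : S) : option (option 'I_m) :=
  match q with
  | Some None => if index c xs < m then Some (Some (inord (index c xs))) else Some None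
  | Some (Some j) => if (index c xs < m) || (index c xs == m + j) then None else q
  | None => None
  end.

Definition subword_witness : lang S := dfa_lang subword_step (Some None) isSome.

Definition subword_access (q : option (option 'I_m)) : seq S :=
  match q with
  | Some None => [::]
  | Some (Some i) => [:: choice_letter i]
  | None => [:: choice_letter 0; choice_letter 0]
  end.

Lemma index_choice i : i < m -> index (choice_letter i) xs = i.
Proof. by move=> hi; rewrite index_uniq // xs_size; lia. Qed.

Lemma index_veto i : i < m -> index (veto_letter i) xs = m + i.
Proof. by move=> hi; rewrite index_uniq // xs_size; lia. Qed.

Lemma subword_step_choice q i : i < m ->
  subword_step q (choice_letter i) = if q is Some None then Some (Some (inord i)) else None.
Proof. by move=> hi; case: q => [[j|]|] //=; rewrite index_choice ?hi. Qed.

Lemma subword_step_veto q i : i < m ->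
  subword_step q (veto_letter i) =
  if q is Some (Some j) then (if j == i :> nat then None else q) else q.
Proof.
move=> hi; case: q => [[j|]|] //=; rewrite index_veto // ltnNge leq_addr //=.
by rewrite eqn_add2l eq_sym.
Qed.

Lemma run_vetoes q l : all (fun i => i < m) l ->
  run subword_step q (map veto_letter l) =
  if q is Some (Some j) then (if (j : nat) \in l then None else q) else q.
Proof.
elim: l q => [|i l IH] q; first by case: q => [[]|].
rewrite /= => /andP [hi hl]; rewrite run_cons subword_step_veto // IH //.
by case: q => [[j|]|] //; rewrite inE; case: eqP.
Qed.

Lemma subword_run_access q : run subword_step (Some None) (subword_access q) = q.
Proof.
case: q => [[i|]|] //; first by rewrite run_seq1 subword_step_choice // inord_val.
by rewrite run_cons run_seq1 !subword_step_choice.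
Qed.

Lemma subword_witness_closed : subword_closed subword_witness.
Proof.
pose R := [rel q1 q2 : option (option 'I_m) | (q1 == q2) || ((q1 == Some None) && isSome q2)].
apply: (dfa_subword_closed (R := R)).
- by rewrite /R /= ?eqxx.
- by case=> // _; apply: absorbing_dead.
- by move=> q1 q2 /orP [/eqP -> | /andP [/eqP -> _]].
move=> q1 q2 c /orP [/eqP <- | /andP [/eqP -> hq2]] hacc.
  split; last by rewrite /R /= eqxx.
  case: q1 hacc => [[j|]|] //= hacc; last by rewrite hacc orbT.
  by move: hacc; case: ifP => // _ _; rewrite eqxx.
split; first by rewrite /R /= hacc orbT.
case: q2 hq2 hacc => [[j|]|] //= _; last by rewrite eqxx.
by case: ifP => // /norP [/negbTE -> _] _.
Qed.

Lemma subword_witness_sc : sc_eq subword_witness m.+2.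
Proof.
have -> : m.+2 = #|{: option (option 'I_m)}| by rewrite !card_option card_ord.
apply: (dfa_sc_eq subword_run_access) => -[[i|]|] [[j|]|] //= hij; try by exists [::].
- exists [:: veto_letter i]; rewrite !run_seq1 !subword_step_veto //= eqxx.
  by have -> : (j == i :> nat) = false by apply: contraNF hij => /eqP/val_inj ->.
- by exists [:: veto_letter i]; rewrite !run_seq1 !subword_step_veto //= eqxx.
- by exists [:: veto_letter j]; rewrite !run_seq1 !subword_step_veto //= eqxx.
Qed.

Lemma subword_witness_rev_sc : sc_eq (rev_lang subword_witness) (2 ^ m + 1).
Proof.
pose vetoed (s : m.-tuple bool) := [seq i <- iota 0 m | nth false s i].
have vetoed_lt s : all (fun i => i < m) (vetoed s).
  by apply/allP => i; rewrite mem_filter mem_iota => /andP [].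
have hinj : quot_injective (rev_lang subword_witness)
              (fun s => rev (map veto_letter (vetoed s))).
  apply: (dfa_rev_quot_injective subword_run_access (q := fun j => Some (Some j))) => j s s'.
  rewrite !run_vetoes // !mem_filter mem_iota add0n ltn_ord -!tnth_nth.
  by case: (tnth s j); case: (tnth s' j).
have -> : 2 ^ m + 1 = #|{: option (m.-tuple bool)}|.
  by rewrite card_option card_tuple card_bool addn1.
apply: (sc_eq_of_quot_injective _ (quot_injective_option (w0 := subword_access None) hinj _)).
  rewrite card_option card_tuple card_bool -[(2 ^ m).+1]addn1.
  have := factor_upper _ subword_witness_sc (subword_closed_factor subword_witness_closed).
  by rewrite subn2; apply.
move=> s; apply: (dfa_rev_quot_neq subword_run_access (q := Some None)).
have -> : rev (subword_access None) = subword_access None by [].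
by rewrite revK run_vetoes // subword_run_access.
Qed.
End SubwordWitness.

Section Tightness.
Variable S : finType.

Lemma distinct_letters k : k <= #|S| -> exists xs : seq S, size xs = k /\ uniq xs.
Proof.
move=> hk; exists (take k (enum S)).
by rewrite size_takel -?cardE // take_uniq ?enum_uniq.
Qed.

Lemma two_letters : 2 <= #|S| -> exists a b : S, a != b.
Proof.
move=> /distinct_letters [[|a [|b xs]] [_ hu]] //.
by move: hu => /= /andP [/[!inE] /norP [hab _] _]; exists a, b.
Qed.

Lemma three_letters : 3 <= #|S| -> exists a b e : S, a != b /\ e \notin [:: a; b].
Proof.
move=> /distinct_letters [[|a [|b [|e xs]]] [_ hu]] //.
move: hu; rewrite /= !inE !negb_or => /and4P [/and3P [hab hae _] /andP [hbe _] _ _].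
by exists a, b, e; rewrite !inE !negb_or ![e == _]eq_sym hae hbe.
Qed.

Lemma prefix_tight : 2 <= #|S| -> forall n, 2 <= n ->
  exists L : lang S, prefix_closed L /\ sc_eq L n /\ sc_eq (rev_lang L) (2 ^ n.-1).
Proof.
move=> hS [|[|m']] // _; have [a [b hab]] := two_letters hS.
exists (prefix_witness a b m'); split; first exact: prefix_witness_closed.
by split; [exact: prefix_witness_sc | exact: prefix_witness_rev_sc].
Qed.

Lemma suffix_tight : 3 <= #|S| -> forall n, 2 <= n ->
  exists L : lang S, suffix_closed L /\ sc_eq L n /\ sc_eq (rev_lang L) (2 ^ n.-1 + 1).
Proof.
move=> hS [|[|m']] // _; have [a [b [e [hab he]]]] := three_letters hS.
exists (suffix_witness a b m'); split; first exact: suffix_witness_closed.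
by split; [exact: (suffix_witness_sc _ hab he) | exact: (suffix_witness_rev_sc _ hab he)].
Qed.

Lemma factor_tight : 3 <= #|S| -> forall n, 2 <= n ->
  exists L : lang S, factor_closed L /\ sc_eq L n /\ sc_eq (rev_lang L) (2 ^ (n - 2) + 1).
Proof.
move=> hS [|[|[|m']]] // _; have [a [b [e [hab he]]]] := three_letters hS.
  exists (letter_star a); split; first exact/subword_closed_factor/letter_star_subword.
  by split; [exact: letter_star_sc hab | exact: letter_star_rev_sc hab].
exists (factor_witness a b m'); split; first exact: factor_witness_closed.
rewrite subn2; split; first exact: (factor_witness_sc _ hab he).
exact: (factor_witness_rev_sc _ hab he).
Qed.

Lemma subword_tight n : 2 <= n -> 2 * n <= #|S| ->
  exists L : lang S, subword_closed L /\ sc_eq L n /\ sc_eq (rev_lang L) (2 ^ (n - 2) + 1).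
Proof.
case: n => [|[|[|m']]] // _ hS.
  have [a [c hac]] := two_letters (leq_trans (isT : 2 <= 2 * 2) hS).
  exists (letter_star a); split; first exact: letter_star_subword.
  by split; [exact: letter_star_sc hac | exact: letter_star_rev_sc hac].
have [[|x0 xs] [hxs uxs]] := @distinct_letters (m'.+1 + m'.+1) ltac:(lia); first by [].
exists (subword_witness (x0 :: xs) m'); split; first exact: subword_witness_closed.
rewrite subn2; split; first exact: (subword_witness_sc x0 hxs uxs).
exact: (subword_witness_rev_sc x0 hxs uxs).
Qed.
End Tightness.

Lemma sc_eq1_rev (S : finType) (L : lang S) : sc_eq L 1 -> sc_eq (rev_lang L) 1.
Proof. by move=> hL; apply: sc_eq_const => w; rewrite /rev_lang !(sc_eq1_const hL). Qed.

Theorem theorem5 :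
  (forall (S : finType) (L : lang S), 0 < #|S| -> sc_eq L 1 ->
     (prefix_closed L \/ suffix_closed L \/ factor_closed L \/ subword_closed L) ->
     sc_eq (rev_lang L) 1) /\
  (forall (S : finType) (L : lang S) (n : nat), 0 < #|S| -> 2 <= n -> sc_eq L n ->
     prefix_closed L -> sc_le (rev_lang L) (2 ^ n.-1)) /\
  (forall (S : finType), 2 <= #|S| -> forall n, 2 <= n ->
     exists L : lang S, prefix_closed L /\ sc_eq L n /\ sc_eq (rev_lang L) (2 ^ n.-1)) /\
  (forall (S : finType) (L : lang S) (n : nat), 0 < #|S| -> 2 <= n -> sc_eq L n ->
     suffix_closed L -> sc_le (rev_lang L) (2 ^ n.-1 + 1)) /\
  (forall (S : finType), 3 <= #|S| -> forall n, 2 <= n ->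
     exists L : lang S, suffix_closed L /\ sc_eq L n /\ sc_eq (rev_lang L) (2 ^ n.-1 + 1)) /\
  (forall (S : finType) (L : lang S) (n : nat), 0 < #|S| -> 2 <= n -> sc_eq L n ->
     factor_closed L -> sc_le (rev_lang L) (2 ^ (n - 2) + 1)) /\
  (forall (S : finType), 3 <= #|S| -> forall n, 2 <= n ->
     exists L : lang S, factor_closed L /\ sc_eq L n /\ sc_eq (rev_lang L) (2 ^ (n - 2) + 1)) /\
  (forall (S : finType) (L : lang S) (n : nat), 0 < #|S| -> 2 <= n -> sc_eq L n ->
     subword_closed L -> sc_le (rev_lang L) (2 ^ (n - 2) + 1)) /\
  (forall n, 2 <= n -> forall (S : finType), 2 * n <= #|S| ->
     exists L : lang S, subword_closed L /\ sc_eq L n /\ sc_eq (rev_lang L) (2 ^ (n - 2) + 1)).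
Proof.
split; first by move=> S L _ hL _; exact: sc_eq1_rev.
split; first by move=> S L n _; exact: prefix_upper.
split; first exact: prefix_tight.
split; first by move=> S L n _ _; exact: suffix_upper.
split; first exact: suffix_tight.
split; first by move=> S L n _; exact: factor_upper.
split; first exact: factor_tight.
split; first by move=> S L n _ hn hL /subword_closed_factor; exact: factor_upper.
by move=> n hn S; exact: subword_tight.
Qed.
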